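(* Let $M \in \mathbb{Z}^+$ and let $p_1$ be a real number with $0.5 \le p_1 < \frac{M+1.5}{M+3}$. Set $p_2 = 1 - p_1$ and $\delta = \frac{p_1 - 0.5}{M}$, and define for $m \in \{0,1,\dots,M\}$ the prior weights $$\omega_{\mathrm{FE}}(m) = p_1 - \delta m, \qquad \omega_{\mathrm{HPO}}(m) = p_2 + \delta m.$$ Define integer sequences $N_{\mathrm{FE}}(m), N_{\mathrm{HPO}}(m)$ for $m = 0,1,\dots,M$ by $N_{\mathrm{FE}}(0) = N_{\mathrm{HPO}}(0) = 0$ and, for $0 \le m \le M-1$, $$I(m+1) = \begin{cases} 1, & \text{if } \dfrac{\omega_{\mathrm{FE}}(m)}{1+N_{\mathrm{FE}}(m)} > \dfrac{\omega_{\mathrm{HPO}}(m)}{1+N_{\mathrm{HPO}}(m)},\\[2mm] 0, & \text{otherwise,}\end{cases}$$ $$N_{\mathrm{FE}}(m+1) = N_{\mathrm{FE}}(m) + I(m+1), \qquad N_{\mathrm{HPO}}(m+1) = N_{\mathrm{HPO}}(m) + 1 - I(m+1).$$ Then $$N_{\mathrm{FE}}(M),\ N_{\mathrm{HPO}}(M) \in \left\{ \left\lfloor \tfrac{M}{2} \right\rfloor, \left\lceil \tfrac{M}{2} \right\rceil \right\}.$$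
   Context: This models a two-armed selector that, at each of $M$ iterations, chooses between two actions FE and HPO. The selection rule above is the reduction, under a neutral reward signal (equal constant exploitation values for both arms), of the rule choosing $\arg\max_{a\in\{\mathrm{FE},\mathrm{HPO}\}} \omega_a(m)\frac{\sqrt{N_{\mathrm{FE}}(m)+N_{\mathrm{HPO}}(m)}}{1+N_a(m)}$ after dividing out the common factor; $I(m+1)=1$ means FE is chosen at iteration $m+1$, and ties are resolved in favor of HPO. $N_a(m)$ is the number of times action $a$ has been chosen in the first $m$ iterations, so $N_{\mathrm{FE}}(m)+N_{\mathrm{HPO}}(m)=m$. *)

From Stdlib Require Import Reals Lra Lia.
Open Scope R_scope.

Definition delta (M : nat) (p1 : R) : R := (p1 - 1/2) / INR M.
Definition omega_FE (M : nat) (p1 : R) (m : nat) : R := p1 - delta M p1 * INR m.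
Definition omega_HPO (M : nat) (p1 : R) (m : nat) : R :=
  (1 - p1) + delta M p1 * INR m.

(* Selection indicator I(m+1): true (=1) iff FE chosen, given counts (nFE, nHPO)
   after m iterations; ties go to HPO. *)
Definition choose_FE (M : nat) (p1 : R) (m nFE nHPO : nat) : bool :=
  if Rlt_dec (omega_HPO M p1 m / (1 + INR nHPO))
             (omega_FE M p1 m / (1 + INR nFE))
  then true else false.

Fixpoint counts (M : nat) (p1 : R) (m : nat) : nat * nat :=
  match m with
  | O => (0%nat, 0%nat)
  | S k => let (a, b) := counts M p1 k in
           if choose_FE M p1 k a b then (S a, b) else (a, S b)
  end.

Definition N_FE (M : nat) (p1 : R) (m : nat) : nat := fst (counts M p1 m).
Definition N_HPO (M : nat) (p1 : R) (m : nat) : nat := snd (counts M p1 m).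

(* Clearing denominators, FE is chosen at step m exactly when
   N_FE - N_HPO < 2 delta (M - m) (m + 2).  This threshold is nonnegative, vanishes at
   m = M, and (thanks to the upper bound on p1) drops by less than 1 per step.  Hence the
   difference N_FE - N_HPO stays in [-1, 2 + threshold): HPO is only chosen when the
   difference is at least the threshold >= 0, and FE only when it is below it.  At m = M
   this forces |N_FE - N_HPO| <= 1 with N_FE + N_HPO = M. *)

From Stdlib Require Import Reals Lra Lia.
Open Scope R_scope.

Lemma Rdiv_lt_cross (A B u v : R) :
  0 < u -> 0 < v -> (A / u < B / v <-> A * v < B * u).
Proof.
  intros Hu Hv.
  assert (Huv : 0 < u * v) by (apply Rmult_lt_0_compat; assumption).
  replace (A * v) with (A / u * (u * v)) by (field; lra).
  replace (B * u) with (B / v * (u * v)) by (field; lra).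
  split; intro H.
  - apply Rmult_lt_compat_r; assumption.
  - exact (Rmult_lt_reg_r _ _ _ Huv H).
Qed.

Lemma nat_balanced_halves (a b n : nat) :
  (a + b = n)%nat -> (a <= b + 1)%nat -> (b <= a + 1)%nat ->
  a = Nat.div n 2 \/ a = Nat.div (n + 1) 2.
Proof.
  intros Hab Ha Hb.
  pose proof (Nat.div_mod n 2 ltac:(lia)).
  pose proof (Nat.mod_upper_bound n 2 ltac:(lia)).
  pose proof (Nat.div_mod (n + 1) 2 ltac:(lia)).
  pose proof (Nat.mod_upper_bound (n + 1) 2 ltac:(lia)).
  lia.
Qed.

Definition fe_threshold (M : nat) (p1 : R) (m : nat) : R :=
  2 * delta M p1 * (INR M - INR m) * (INR m + 2).

Lemma fe_threshold_at_end (M : nat) (p1 : R) : fe_threshold M p1 M = 0.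
Proof. unfold fe_threshold. ring. Qed.

Section Balance.

Variables (M : nat) (p1 : R).
Hypothesis M_pos : (1 <= M)%nat.
Hypothesis delta_ge0 : 0 <= delta M p1.
Hypothesis delta_small : delta M p1 * (2 * INR M + 6) < 1.

Let INR_M_ge1 : 1 <= INR M.
Proof. apply (le_INR 1); exact M_pos. Qed.

Lemma choose_FE_iff (m a b : nat) :
  (a + b = m)%nat ->
  choose_FE M p1 m a b = true <-> INR a - INR b < fe_threshold M p1 m.
Proof.
  intros Hab.
  assert (Habr : INR a + INR b = INR m) by (rewrite <- plus_INR; f_equal; exact Hab).
  pose proof (pos_INR a) as Ha. pose proof (pos_INR b) as Hb.
  (* p1 = 1/2 + delta M, so the common 1/2 cancels from both cross products *)
  assert (Hp1 : p1 = 1/2 + delta M p1 * INR M) by (unfold delta; field; lra).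
  assert (Hcross :
    omega_HPO M p1 m / (1 + INR b) < omega_FE M p1 m / (1 + INR a) <->
    INR a - INR b < fe_threshold M p1 m).
  { rewrite Rdiv_lt_cross by lra.
    assert (Hgap : (omega_FE M p1 m * (1 + INR b) - omega_HPO M p1 m * (1 + INR a)) * 2
                   = fe_threshold M p1 m - (INR a - INR b)).
    { unfold omega_HPO, omega_FE, fe_threshold. set (d := delta M p1) in *.
      clearbody d. rewrite Hp1, <- Habr. field. }
    split; intro; lra. }
  unfold choose_FE. destruct (Rlt_dec _ _) as [H | H]; split; intro H'.
  - apply Hcross; exact H.
  - reflexivity.
  - discriminate.
  - exfalso. apply H, Hcross, H'.
Qed.

Lemma fe_threshold_ge0 (m : nat) : (m <= M)%nat -> 0 <= fe_threshold M p1 m.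
Proof.
  intros Hm. unfold fe_threshold.
  assert (INR m <= INR M) by (apply le_INR; exact Hm).
  pose proof (pos_INR m).
  apply Rmult_le_pos; [apply Rmult_le_pos |]; lra.
Qed.

Lemma fe_threshold_step (m : nat) :
  (m < M)%nat -> fe_threshold M p1 m - 1 < fe_threshold M p1 (S m).
Proof.
  intros Hm. unfold fe_threshold. rewrite S_INR.
  assert (INR m + 1 <= INR M) by (rewrite <- S_INR; apply le_INR; exact Hm).
  pose proof (pos_INR m).
  (* the drop is 2 delta (2m + 3 - M) <= delta (2M + 6) *)
  assert (delta M p1 * (2 * INR M + 6 - 2 * (2 * INR m + 3 - INR M)) >= 0)
    by (apply Rle_ge, Rmult_le_pos; lra).
  nra.
Qed.

Lemma counts_balance (m : nat) :
  (m <= M)%nat ->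
  let (a, b) := counts M p1 m in
  (a + b = m)%nat /\ -1 <= INR a - INR b < 2 + fe_threshold M p1 m.
Proof.
  induction m as [| m IH]; intros Hm.
  - simpl. pose proof (fe_threshold_ge0 0 ltac:(lia)). split; [reflexivity | lra].
  - specialize (IH ltac:(lia)). simpl. destruct (counts M p1 m) as [a b].
    destruct IH as [Hab Hdiff].
    pose proof (fe_threshold_ge0 m ltac:(lia)).
    pose proof (fe_threshold_step m ltac:(lia)).
    destruct (choose_FE M p1 m a b) eqn:Hchoice.
    + apply (choose_FE_iff m a b Hab) in Hchoice.
      split; [lia | rewrite S_INR; lra].
    + assert (~ INR a - INR b < fe_threshold M p1 m)
        by (rewrite <- (choose_FE_iff m a b Hab), Hchoice; discriminate).
      split; [lia | rewrite S_INR; lra].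
Qed.

End Balance.

Lemma delta_bounds (M : nat) (p1 : R) :
  (1 <= M)%nat -> 1/2 <= p1 -> p1 < (INR M + 3/2) / (INR M + 3) ->
  0 <= delta M p1 /\ delta M p1 * (2 * INR M + 6) < 1.
Proof.
  intros HM Hlo Hhi.
  assert (HMr : 1 <= INR M) by (apply (le_INR 1); exact HM).
  assert (Hcleared : p1 * (INR M + 3) < INR M + 3/2).
  { apply (Rmult_lt_compat_r (INR M + 3)) in Hhi; [| lra].
    replace ((INR M + 3/2) / (INR M + 3) * (INR M + 3)) with (INR M + 3/2) in Hhi
      by (field; lra).
    exact Hhi. }
  split.
  - unfold delta. apply Rmult_le_pos; [lra | left; apply Rinv_0_lt_compat; lra].
  - apply (Rmult_lt_reg_r (INR M)); [lra |].
    replace (delta M p1 * (2 * INR M + 6) * INR M)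
      with ((p1 - 1/2) * (2 * INR M + 6)) by (unfold delta; field; lra).
    lra.
Qed.

Theorem theorem1 (M : nat) (p1 : R) :
  (1 <= M)%nat ->
  1/2 <= p1 ->
  p1 < (INR M + 3/2) / (INR M + 3) ->
  (N_FE M p1 M = Nat.div M 2 \/ N_FE M p1 M = Nat.div (M + 1) 2) /\
  (N_HPO M p1 M = Nat.div M 2 \/ N_HPO M p1 M = Nat.div (M + 1) 2).
Proof.
  intros HM Hlo Hhi.
  destruct (delta_bounds M p1 HM Hlo Hhi) as [Hdelta_ge0 Hdelta_small].
  pose proof (counts_balance M p1 HM Hdelta_ge0 Hdelta_small M (le_n M)) as Hbal.
  unfold N_FE, N_HPO. destruct (counts M p1 M) as [a b]. cbn [fst snd].
  rewrite fe_threshold_at_end in Hbal.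
  destruct Hbal as [Hab [Hdiff_lo Hdiff_hi]].
  assert (Hb : (b <= a + 1)%nat) by (apply INR_le; rewrite plus_INR; simpl; lra).
  assert (Ha : (a < b + 2)%nat) by (apply INR_lt; rewrite plus_INR; simpl; lra).
  split.
  - apply nat_balanced_halves with b; lia.
  - apply (nat_balanced_halves b a M); lia.
Qed.
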